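(* Let $\mathbf X\in\mathbb R^{n\times d}$ have full column rank, $1\le k<d$, $\mathbf y\in\mathbb R^n$ and $\lambda>0$. Let $f_\lambda(\mathbf y;\boldsymbol\beta)=\frac1{2n}\|\mathbf y-\mathbf X\boldsymbol\beta\|_2^2+\lambda(\|\boldsymbol\beta_{1:k}\|_2+\|\boldsymbol\beta_{-1:k}\|_1)$ and $\hat{\boldsymbol\beta}^\lambda=\arg\min_{\boldsymbol\beta\in\mathbb R^d}f_\lambda(\mathbf y;\boldsymbol\beta)$. For $\mathbf b\in\mathbb R^k$ let $\hat{\boldsymbol\beta}^\lambda_{-1:k}(\mathbf b)=\arg\min_{\boldsymbol\gamma\in\mathbb R^{d-k}}\big(\frac1{2n}\|\mathbf y-\mathbf X_{1:k}\mathbf b-\mathbf X_{-1:k}\boldsymbol\gamma\|_2^2+\lambda\|\boldsymbol\gamma\|_1\big)$ and let $\hat{\boldsymbol\beta}^\lambda_*(\mathbf b)\in\mathbb R^d$ be the vector whose first $k$ coordinates are $\mathbf b$ and whose remaining coordinates are $\hat{\boldsymbol\beta}^\lambda_{-1:k}(\mathbf b)$. Then for every $\mathbf b\in\mathbb R^k$ the following are equivalent: (1) $\mathbf 0\in\partial_{\boldsymbol\beta_{1:k}}f_\lambda(\mathbf y;\boldsymbol\beta)\big|_{\boldsymbol\beta=\hat{\boldsymbol\beta}^\lambda_*(\mathbf b)}$; (2) $\hat{\boldsymbol\beta}^\lambda=\hat{\boldsymbol\beta}^\lambda_*(\mathbf b)$; (3) $\hat{\boldsymbol\beta}^\lambda_{1:k}=\mathbf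 b$.
   Context: $\mathbf X_{1:k}$ is the first $k$ columns of $\mathbf X$, $\mathbf X_{-1:k}$ the rest; $\boldsymbol\beta_{1:k}$ and $\boldsymbol\beta_{-1:k}$ analogously. $\partial_{\boldsymbol\beta_{1:k}}$ denotes the subdifferential of the (convex) function $\boldsymbol\beta_{1:k}\mapsto f_\lambda(\mathbf y;\boldsymbol\beta)$ with the remaining coordinates held fixed. Both minimizers are unique since $\mathbf X$ and $\mathbf X_{-1:k}$ have full column rank. *)

From HB Require Import structures.
From mathcomp Require Import all_boot all_order all_algebra.
From mathcomp Require Import reals.
Set Implicit Arguments. Unset Strict Implicit. Unset Printing Implicit Defensive.
Import Order.TTheory GRing.Theory Num.Theory.
Local Open Scope ring_scope.

Section Defs.
Variable R : realType.

Definition norm2 (p : nat) (v : 'cV[R]_p) : R := Num.sqrt (\sum_i (v i 0) ^+ 2).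
Definition norm1 (p : nat) (v : 'cV[R]_p) : R := \sum_i `|v i 0|.
Definition dotv (p : nat) (u v : 'cV[R]_p) : R := \sum_i u i 0 * v i 0.

(* f_lambda(y; beta), with d = k + m columns; beta_{1:k} = usubmx beta,
   beta_{-1:k} = dsubmx beta *)
Definition f_lam (n k m : nat) (X : 'M[R]_(n, k + m)) (y : 'cV[R]_n) (lam : R)
  (beta : 'cV[R]_(k + m)) : R :=
  (2 * n%:R)^-1 * (norm2 (y - X *m beta)) ^+ 2
  + lam * (norm2 (usubmx beta) + norm1 (dsubmx beta)).

Definition partial_obj (n k m : nat) (X : 'M[R]_(n, k + m)) (y : 'cV[R]_n) (lam : R)
  (b : 'cV[R]_k) (gamma : 'cV[R]_m) : R :=
  (2 * n%:R)^-1 * (norm2 (y - lsubmx X *m b - rsubmx X *m gamma)) ^+ 2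
  + lam * norm1 gamma.

Definition is_argmin (p : nat) (g : 'cV[R]_p -> R) (x : 'cV[R]_p) : Prop :=
  forall z, g x <= g z.

Definition is_subgradient (p : nat) (g : 'cV[R]_p -> R) (x v : 'cV[R]_p) : Prop :=
  forall z, g x + dotv v (z - x) <= g z.

End Defs.

From HB Require Import structures.
From mathcomp Require Import all_boot all_order all_algebra.
From mathcomp Require Import reals.
From mathcomp Require Import ring lra.
Import Order.TTheory GRing.Theory Num.Theory.
Set Implicit Arguments. Unset Strict Implicit. Unset Printing Implicit Defensive.
Local Open Scope ring_scope.

(* Both objectives have the form F(beta) = c |z - A beta|^2 + P(beta) with c > 0,
   P convex and A injective.  For such F, beta is a global minimizer iff every
   slope P(beta + D) - P(beta) - 2c <z - A beta, A D> is nonnegative, and a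
   minimizer beta satisfies F(beta') >= F(beta) + c |A (beta' - beta)|^2, so it
   is unique.  Condition (1) says that b minimizes f_lambda along the first block
   at (b, gammahat b), and gammahat b minimizes it along the second block; since
   the penalty |beta_{1:k}|_2 + |beta_{-1:k}|_1 is block-separable, the two
   blockwise slope conditions add up to the full one, so (b, gammahat b) is the
   minimizer betahat.  Conversely, if betahat_{1:k} = b then betahat_{-1:k}
   minimizes the restricted lasso, hence equals gammahat b by uniqueness. *)

Section Norms.
Variables (R : realType) (p : nat).
Implicit Types (a : R) (u v w : 'cV[R]_p).

Lemma dotvC u v : dotv u v = dotv v u.
Proof. by apply: eq_bigr => i _; rewrite mulrC. Qed.

Lemma dotv0l v : dotv 0 v = 0.
Proof. by rewrite /dotv big1 // => i _; rewrite mxE mul0r. Qed.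

Lemma dotvDr u v w : dotv u (v + w) = dotv u v + dotv u w.
Proof. by rewrite /dotv -big_split; apply: eq_bigr => i _; rewrite mxE mulrDr. Qed.

Lemma dotvZr a u v : dotv u (a *: v) = a * dotv u v.
Proof. by rewrite /dotv mulr_sumr; apply: eq_bigr => i _; rewrite mxE mulrCA. Qed.

Lemma dotvZl a u v : dotv (a *: u) v = a * dotv u v.
Proof. by rewrite dotvC dotvZr dotvC. Qed.

Lemma norm2_ge0 v : 0 <= norm2 v.
Proof. exact: sqrtr_ge0. Qed.

Lemma sqr_norm2 v : norm2 v ^+ 2 = \sum_i v i 0 ^+ 2.
Proof. by rewrite sqr_sqrtr // sumr_ge0 // => i _; rewrite sqr_ge0. Qed.

Lemma norm2_eq0 v : norm2 v = 0 -> v = 0.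
Proof.
move=> v0; apply/matrixP => i j; rewrite (ord1 j) mxE.
have sum0 : \sum_i v i 0 ^+ 2 = 0 by rewrite -sqr_norm2 v0 expr0n.
by apply/eqP; rewrite -sqrf_eq0; apply/eqP/(psumr_eq0P _ sum0) => // k _; apply: sqr_ge0.
Qed.

Lemma norm2_gt0 v : v != 0 -> 0 < norm2 v.
Proof.
by move=> v_neq0; rewrite lt_def norm2_ge0 andbT; apply: contra_neq v_neq0; apply: norm2_eq0.
Qed.

Lemma sqr_norm2D u v :
  norm2 (u + v) ^+ 2 = norm2 u ^+ 2 + 2 * dotv u v + norm2 v ^+ 2.
Proof.
rewrite !sqr_norm2 /dotv mulr_sumr -!big_split /=.
by apply: eq_bigr => i _; rewrite mxE; ring.
Qed.

Lemma sqr_norm2B u v :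
  norm2 (u - v) ^+ 2 = norm2 u ^+ 2 - 2 * dotv u v + norm2 v ^+ 2.
Proof.
rewrite !sqr_norm2 /dotv mulr_sumr -sumrB -big_split /=.
by apply: eq_bigr => i _; rewrite !mxE; ring.
Qed.

Lemma norm2Z a v : norm2 (a *: v) = `|a| * norm2 v.
Proof.
rewrite /norm2 -sqrtr_sqr -sqrtrM ?sqr_ge0 // mulr_sumr.
by congr Num.sqrt; apply: eq_bigr => i _; rewrite mxE exprMn.
Qed.

(* Cauchy-Schwarz: 0 <= |q u - s v|^2 = 2 s q (s q - <u, v>) for s = |u|, q = |v|. *)
Lemma dotv_le_norm2 u v : dotv u v <= norm2 u * norm2 v.
Proof.
have [-> | u_neq0] := eqVneq u 0; first by rewrite dotv0l mulr_ge0 ?norm2_ge0.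
have [-> | v_neq0] := eqVneq v 0; first by rewrite dotvC dotv0l mulr_ge0 ?norm2_ge0.
have sq_gt0 := mulr_gt0 (norm2_gt0 u_neq0) (norm2_gt0 v_neq0).
have := sqr_ge0 (norm2 (norm2 v *: u - norm2 u *: v)).
rewrite sqr_norm2B !norm2Z dotvZl dotvZr !ger0_norm ?norm2_ge0 //.
nra.
Qed.

Lemma norm2D u v : norm2 (u + v) <= norm2 u + norm2 v.
Proof.
rewrite -(ler_pXn2r (n := 2)) ?nnegrE ?addr_ge0 ?norm2_ge0 // sqr_norm2D sqrrD.
have := dotv_le_norm2 u v; lra.
Qed.

Lemma norm1D u v : norm1 (u + v) <= norm1 u + norm1 v.
Proof. by rewrite /norm1 -big_split ler_sum // => i _; rewrite mxE ler_normD. Qed.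

Lemma norm1Z a v : norm1 (a *: v) = `|a| * norm1 v.
Proof. by rewrite /norm1 mulr_sumr; apply: eq_bigr => i _; rewrite mxE normrM. Qed.

End Norms.
Definition convex_fun (R : realType) (p : nat) (P : 'cV[R]_p -> R) : Prop :=
  forall (t : R) u v, 0 <= t <= 1 -> P ((1 - t) *: u + t *: v) <= (1 - t) * P u + t * P v.

Section Convexity.
Variables (R : realType) (p : nat).
Implicit Types (P : 'cV[R]_p -> R).

Lemma seminorm_convex P :
  (forall u v, P (u + v) <= P u + P v) -> (forall a u, P (a *: u) = `|a| * P u) ->
  convex_fun P.
Proof.
move=> PD PZ t u v /andP[t_ge0 t_le1]; apply: le_trans (PD _ _) _.
by rewrite !PZ !ger0_norm ?subr_ge0.
Qed.

Lemma convex_funZ (lam : R) P : 0 <= lam -> convex_fun P -> convex_fun (fun v => lam * P v).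
Proof.
move=> lam_ge0 P_convex t u v /(P_convex _ u v)/(ler_wpM2l lam_ge0).
by rewrite mulrDr !(mulrCA lam).
Qed.

Lemma convex_fun_col_mx k m (P : 'cV[R]_(k + m) -> R)
    (P1 : 'cV[R]_k -> R) (P2 : 'cV[R]_m -> R) :
  (forall u v, P (col_mx u v) = P1 u + P2 v) -> convex_fun P1 -> convex_fun P2 ->
  convex_fun P.
Proof.
move=> PE P1_convex P2_convex t u v t01.
rewrite -[u]vsubmxK -[v]vsubmxK !scale_col_mx add_col_mx !PE.
have := P1_convex t (usubmx u) (usubmx v) t01.
have := P2_convex t (dsubmx u) (dsubmx v) t01.
lra.
Qed.

Lemma norm2_convex : convex_fun (@norm2 R p).
Proof. exact: seminorm_convex (@norm2D R p) (@norm2Z R p). Qed.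

Lemma norm1_convex : convex_fun (@norm1 R p).
Proof. exact: seminorm_convex (@norm1D R p) (@norm1Z R p). Qed.

End Convexity.

Lemma linear_coef_ge0 (R : realFieldType) (a b : R) :
  (forall t, 0 < t <= 1 -> 0 <= a * t + b * t ^+ 2) -> 0 <= a.
Proof.
move=> ge0; rewrite leNgt; apply/negP => a_lt0.
have b_ge : - a <= b by have := ge0 1; rewrite ltr01 lexx expr1n !mulr1; lra.
have b_gt0 : 0 < b by lra.
(* at t = -a / 2b the quadratic equals a t / 2 < 0 *)
set t := - a / (2 * b).
have t_gt0 : 0 < t by rewrite divr_gt0 ?mulr_gt0; lra.
have t_le1 : t <= 1 by rewrite ler_pdivrMr ?mulr_gt0 //; lra.
have bt : b * t = - a / 2 by rewrite /t; field; lra.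
have := ge0 t; rewrite t_gt0 t_le1 => /(_ isT).
have -> : a * t + b * t ^+ 2 = t * (a + b * t) by ring.
rewrite bt; nra.
Qed.

Section PenalizedLeastSquares.
Variables (R : realType) (n p : nat) (c : R) (z : 'cV[R]_n) (A : 'M[R]_(n, p)).
Variable P : 'cV[R]_p -> R.

Definition penalized_lsq (beta : 'cV[R]_p) : R := c * norm2 (z - A *m beta) ^+ 2 + P beta.
Local Notation F := penalized_lsq.

Lemma penalized_lsqD beta D :
  F (beta + D) = F beta
    + (P (beta + D) - P beta - 2 * c * dotv (z - A *m beta) (A *m D))
    + c * norm2 (A *m D) ^+ 2.
Proof. by rewrite /F mulmxDr opprD addrA sqr_norm2B; ring. Qed.

Lemma first_order_argmin beta : 0 <= c ->
  (forall D, 0 <= P (beta + D) - P beta - 2 * c * dotv (z - A *m beta) (A *m D)) ->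
  is_argmin F beta.
Proof.
move=> c_ge0 slope_ge0 beta'; rewrite -(subrKC beta beta') penalized_lsqD -addrA lerDl.
by apply: addr_ge0; [exact: slope_ge0 | exact: mulr_ge0 c_ge0 (sqr_ge0 _)].
Qed.

Hypothesis P_convex : convex_fun P.

Lemma argmin_segment_first_order beta D :
  (forall t, 0 < t <= 1 -> F beta <= F (beta + t *: D)) ->
  0 <= P (beta + D) - P beta - 2 * c * dotv (z - A *m beta) (A *m D).
Proof.
move=> F_min; apply: (linear_coef_ge0 (b := c * norm2 (A *m D) ^+ 2)) => t t01.
have /andP[t_gt0 t_le1] := t01.
have P_chord : P (beta + t *: D) <= (1 - t) * P beta + t * P (beta + D).
  have -> : beta + t *: D = (1 - t) *: beta + t *: (beta + D).
    by rewrite scalerDr addrA -scalerDl subrK scale1r.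
  by apply: P_convex; rewrite (ltW t_gt0) t_le1.
have := F_min t t01; rewrite penalized_lsqD -scalemxAr dotvZr norm2Z (ger0_norm (ltW t_gt0)).
nra.
Qed.

Lemma argmin_quadratic_growth beta : is_argmin F beta ->
  forall beta', F beta + c * norm2 (A *m (beta' - beta)) ^+ 2 <= F beta'.
Proof.
move=> F_min beta'; rewrite -{2}(subrKC beta beta') penalized_lsqD lerD2r lerDl.
by apply: argmin_segment_first_order => t _; apply: F_min.
Qed.

Lemma penalized_lsq_argmin_unique : 0 < c -> (forall D : 'cV[R]_p, A *m D = 0 -> D = 0) ->
  forall beta1 beta2, is_argmin F beta1 -> is_argmin F beta2 -> beta1 = beta2.
Proof.
move=> c_gt0 A_inj beta1 beta2 beta1_min beta2_min.
have growth := argmin_quadratic_growth beta1_min beta2.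
have N0 : norm2 (A *m (beta2 - beta1)) = 0.
  apply/eqP; rewrite -sqrf_eq0 eq_le sqr_ge0 andbT -(pmulr_rle0 _ c_gt0).
  by have := beta2_min beta1; lra.
by apply/eqP; rewrite eq_sym -subr_eq0; apply/eqP/A_inj/norm2_eq0.
Qed.

End PenalizedLeastSquares.

Section BlockwiseMinimality.
Variables (R : realType) (n k m : nat) (c : R) (z : 'cV[R]_n) (A : 'M[R]_(n, k + m)).
Variables (P : 'cV[R]_(k + m) -> R) (P1 : 'cV[R]_k -> R) (P2 : 'cV[R]_m -> R).
Hypotheses (c_ge0 : 0 <= c) (PE : forall u v, P (col_mx u v) = P1 u + P2 v).
Hypotheses (P1_convex : convex_fun P1) (P2_convex : convex_fun P2).
Local Notation F := (penalized_lsq c z A P).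

Lemma blockwise_argmin u0 v0 :
  is_argmin (fun u => F (col_mx u v0)) u0 -> is_argmin (fun v => F (col_mx u0 v)) v0 ->
  is_argmin F (col_mx u0 v0).
Proof.
move=> u0_min v0_min; apply: first_order_argmin => // D.
have P_convex := convex_fun_col_mx PE P1_convex P2_convex.
rewrite -[D]vsubmxK; set du := usubmx D; set dv := dsubmx D.
set b0 := col_mx u0 v0; set r := z - A *m b0.
have slope_u : 0 <= P (b0 + col_mx du 0) - P b0 - 2 * c * dotv r (A *m col_mx du 0).
  apply: (argmin_segment_first_order P_convex) => t _.
  by rewrite scale_col_mx add_col_mx scaler0 addr0; apply: u0_min.
have slope_v : 0 <= P (b0 + col_mx 0 dv) - P b0 - 2 * c * dotv r (A *m col_mx 0 dv).
  apply: (argmin_segment_first_order P_convex) => t _.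
  by rewrite scale_col_mx add_col_mx scaler0 addr0; apply: v0_min.
have -> : col_mx du dv = col_mx du 0 + col_mx 0 dv by rewrite add_col_mx addr0 add0r.
move: slope_u slope_v; rewrite mulmxDr dotvDr /b0 !add_col_mx !addr0 !add0r !PE.
lra.
Qed.

End BlockwiseMinimality.

Lemma is_subgradient0 (R : realType) (p : nat) (g : 'cV[R]_p -> R) x :
  is_subgradient g x 0 <-> is_argmin g x.
Proof. by split=> g_min z; have := g_min z; rewrite dotv0l addr0. Qed.

Lemma full_col_rank_inj (F : fieldType) (n p : nat) (A : 'M[F]_(n, p)) :
  \rank A = p -> forall D : 'cV[F]_p, A *m D = 0 -> D = 0.
Proof.
move=> rkA D AD0; apply: trmx_inj; apply/eqP.
rewrite trmx0 -(mulmx_free_eq0 _ (B := A^T)) ?/row_free ?mxrank_tr ?rkA //.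
by rewrite -trmx_mul AD0 trmx0.
Qed.

Lemma rsubmx_inj (F : fieldType) (n k m : nat) (A : 'M[F]_(n, k + m)) :
  (forall D : 'cV[F]_(k + m), A *m D = 0 -> D = 0) ->
  forall D : 'cV[F]_m, rsubmx A *m D = 0 -> D = 0.
Proof.
move=> A_inj D AD0.
have /A_inj/(congr1 dsubmx) : A *m col_mx 0 D = 0.
  by rewrite -[A]hsubmxK mul_row_col mulmx0 add0r.
by rewrite col_mxKd linear0.
Qed.

Section Lasso.
Variables (R : realType) (n k m : nat) (X : 'M[R]_(n, k + m)) (y : 'cV[R]_n) (lam : R).
Local Notation f := (f_lam X y lam).

Lemma f_lamE :
  f = penalized_lsq (2 * n%:R)^-1 y X
        (fun beta => lam * (norm2 (usubmx beta) + norm1 (dsubmx beta))).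
Proof. by []. Qed.

Lemma partial_objE b :
  partial_obj X y lam b
  = penalized_lsq (2 * n%:R)^-1 (y - lsubmx X *m b) (rsubmx X)
      (fun gamma => lam * norm1 gamma).
Proof. by []. Qed.

Lemma f_lam_col_mx u v : f (col_mx u v) = partial_obj X y lam u v + lam * norm2 u.
Proof.
rewrite /f_lam /partial_obj col_mxKu col_mxKd -[X in X *m _]hsubmxK mul_row_col.
by rewrite opprD addrA; ring.
Qed.

Lemma argmin_f_lam_col_mxr u v0 :
  is_argmin (fun v => f (col_mx u v)) v0 <-> is_argmin (partial_obj X y lam u) v0.
Proof. by split=> v0_min v; have := v0_min v; rewrite ?f_lam_col_mx lerD2r. Qed.

Hypotheses (n_gt0 : (0 < n)%N) (lam_ge0 : 0 <= lam).
Hypothesis X_inj : forall D : 'cV[R]_(k + m), X *m D = 0 -> D = 0.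

Let c_gt0 : 0 < (2 * n%:R)^-1 :> R.
Proof. by rewrite invr_gt0 mulr_gt0 ?ltr0n. Qed.

Let penalty_col_mx (u : 'cV[R]_k) (v : 'cV[R]_m) :
  lam * (norm2 (usubmx (col_mx u v)) + norm1 (dsubmx (col_mx u v)))
  = lam * norm2 u + lam * norm1 v.
Proof. by rewrite col_mxKu col_mxKd mulrDr. Qed.

Let lam_norm2_convex (p : nat) := convex_funZ lam_ge0 (@norm2_convex R p).
Let lam_norm1_convex (p : nat) := convex_funZ lam_ge0 (@norm1_convex R p).

Let penalty_convex :
  convex_fun (fun beta : 'cV[R]_(k + m) => lam * (norm2 (usubmx beta) + norm1 (dsubmx beta))).
Proof.
apply: (convex_fun_col_mx (P1 := fun u => lam * norm2 u) (P2 := fun v => lam * norm1 v)).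
- exact: penalty_col_mx.
- exact: lam_norm2_convex.
- exact: lam_norm1_convex.
Qed.

Lemma f_lam_argmin_unique beta1 beta2 :
  is_argmin f beta1 -> is_argmin f beta2 -> beta1 = beta2.
Proof.
by rewrite f_lamE; apply: (penalized_lsq_argmin_unique (z := y) penalty_convex c_gt0 X_inj).
Qed.

Lemma partial_obj_argmin_unique b gamma1 gamma2 :
  is_argmin (partial_obj X y lam b) gamma1 -> is_argmin (partial_obj X y lam b) gamma2 ->
  gamma1 = gamma2.
Proof.
rewrite partial_objE.
apply: (@penalized_lsq_argmin_unique R n m _ _ (rsubmx X)).
- exact: lam_norm1_convex.
- exact: c_gt0.
- exact: rsubmx_inj X_inj.
Qed.

Lemma f_lam_blockwise_argmin u0 v0 :
  is_argmin (fun u => f (col_mx u v0)) u0 -> is_argmin (partial_obj X y lam u0) v0 ->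
  is_argmin f (col_mx u0 v0).
Proof.
move=> u0_min /(argmin_f_lam_col_mxr u0 v0).2 v0_min.
move: u0_min v0_min; rewrite f_lamE.
apply: (@blockwise_argmin R n k m _ y X _ (fun u => lam * norm2 u) (fun v => lam * norm1 v)).
- exact: ltW c_gt0.
- exact: penalty_col_mx.
- exact: lam_norm2_convex.
- exact: lam_norm1_convex.
Qed.

End Lasso.

Theorem lemmaC9 (R : realType) (n k m : nat) (X : 'M[R]_(n, k + m))
  (y : 'cV[R]_n) (lam : R)
  (hk : (0 < k)%N) (hm : (0 < m)%N) (hX : \rank X = (k + m)%N) (hlam : 0 < lam)
  (betahat : 'cV[R]_(k + m)) (hbeta : is_argmin (f_lam X y lam) betahat)
  (gammahat : 'cV[R]_k -> 'cV[R]_m)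
  (hgamma : forall b, is_argmin (partial_obj X y lam b) (gammahat b))
  (b : 'cV[R]_k) :
  (is_subgradient (fun b' => f_lam X y lam (col_mx b' (gammahat b))) b 0
     <-> betahat = col_mx b (gammahat b))
  /\ (betahat = col_mx b (gammahat b) <-> usubmx betahat = b).
Proof.
have n_gt0 : (0 < n)%N by apply: leq_trans (rank_leq_row X); rewrite hX addn_gt0 hk.
have X_inj := full_col_rank_inj hX.
have lam_ge0 := ltW hlam.
split; split.
- move/is_subgradient0 => b_min.
  have bg_min := f_lam_blockwise_argmin n_gt0 lam_ge0 b_min (hgamma b).
  exact: (f_lam_argmin_unique n_gt0 lam_ge0 X_inj hbeta bg_min).
- by move=> beta_eq; apply/is_subgradient0 => u; rewrite -beta_eq; apply: hbeta.
- by move->; rewrite col_mxKu.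
- move=> u_eq.
  have d_min : is_argmin (partial_obj X y lam b) (dsubmx betahat).
    apply: (argmin_f_lam_col_mxr X y lam b (dsubmx betahat)).1 => v.
    by rewrite -u_eq vsubmxK; apply: hbeta.
  have d_eq := partial_obj_argmin_unique n_gt0 lam_ge0 X_inj d_min (hgamma b).
  by rewrite -[betahat]vsubmxK u_eq d_eq.
Qed.
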